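(* Let $\Theta\subseteq F(V)$ be a $\mathrm{q}\L^{*}$-theory. Then $[\Theta]_\sim=\{[p]_\sim\in[F(V)]_\sim: p\in\Theta\}$ is a filter of the MV*-algebra $\langle [F(V)]_\sim;\oplus,-,[0]_\sim,[1]_\sim\rangle$, where $-[p]_\sim=[\neg p]_\sim$, $[p]_\sim\oplus[q]_\sim=[\neg p\to q]_\sim$ and $[0]_\sim=[p\to p]_\sim$.
   Context: Let $V=\{p_1,p_2,\ldots\}$ be a set of propositional variables and $F(V)$ the set of formulas built from $V$ and the constant $1$ with the binary connective $\to$ and the unary connectives $\neg$, ${}^{+}$, ${}^{-}$ (postfix ${}^+,{}^-$ bind tighter than $\neg$, which binds tighter than $\to$). Abbreviations: $p\vee q:=((p^{+}\to q^{+})^{+}\to(\neg p)^{-})\to((q^{-}\to p^{-})^{-}\to p^{-})$; an axiom written $A\leftrightarrow B$ stands for the two axioms $A\to B$ and $B\to A$. Axiom schemas of $\mathrm{q}\L^{*}$ (for all formulas $p,q,r$): (Q1) $(p\to q)\leftrightarrow(\neg q\to\neg p)$; (Q2) $1\leftrightarrow((1\to p)\to 1)$; (Q3) $p\leftrightarrow((q\to q)\to p)$; (Q4) $(p\to q)\leftrightarrow((q^{+}\to p^{-})\to(p^{+}\to q^{-}))$; (Q5) $\neg(p\to q)\leftrightarrow(q\to p)$; (Q6) $(p\to(\neg p\to q))^{+}\leftrightarrow(p^{+}\to(\neg p^{+}\to q^{+}))$; (Q7) $(p\to(q\vee r))\leftrightarrow((p\to r)\vee(p\to q))$; (Q8)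 $(p\vee(q\vee r))\leftrightarrow((p\vee q)\vee r)$; (Q9) $((p\to 1)\to((q\to 1)\to r))\to((q\to 1)\to((p\to 1)\to r))$; (Q10) $p\to 1$; (Q11) $((1\to 1)\to p^{+})\leftrightarrow((p\to 1)\to 1)$ and $((1\to 1)\to p^{-})\leftrightarrow((p\to\neg 1)\to\neg 1)$. Deduction rules: (R1) from $p$ and $p\to q$ infer $(r\to r)\to q$; (R2) from $(r\to r)\to(p\to q)$ infer $p\to q$; (R3) from $p\to q$ and $r\to t$ infer $(q\to r)\to(p\to t)$. For $\Gamma\subseteq F(V)$, $\Gamma\vdash q$ means there is a finite sequence ending in $q$ each member of which is an axiom, a member of $\Gamma$, or obtained from earlier members by a rule; $\Gamma^{\vdash}$ is the set of all such $q$. A $\mathrm{q}\L^{*}$-theory is a set $\Theta\subseteq F(V)$ with $\Theta^{\vdash}=\Theta$. The relation $p\sim q$ iff $\vdash p\to q$ and $\vdash q\to p$ (provable from the empty set) is a congruence and $[p]_\sim$ denotes the class of $p$. An MV*-algebra is an algebra $\langle B;\oplus,-,0,1\rangle$ of type $\langle2,1,0,0\rangle$ satisfying for all $x,y,z$: (MV*1) $x\oplus y=y\oplus x$; (MV*2) $(1\oplus x)\oplus(y\oplus(1\oplus z))=((1\oplus x)\oplus y)\oplus(1\oplus z)$; (MV*3) $x\oplus(-x)=0$; (MV*4) $(x\oplus 1)\oplus 1=1$; (MV*5) $x\oplus 0=x$; (MV*6) $-(x\oplus y)=(-x)\oplus(-y)$; (MV*7) $-(-x)=x$; (MV*8) $x\oplus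 y=(x^{+}\oplus y^{+})\oplus(x^{-}\oplus y^{-})$; (MV*9) $(-x\oplus(x\oplus y))^{+}=-(x^{+})\oplus(x^{+}\oplus y^{+})$; (MV*10) $x\vee y=y\vee x$; (MV*11) $x\vee(y\vee z)=(x\vee y)\vee z$; (MV*12) $x\oplus(y\vee z)=(x\oplus y)\vee(x\oplus z)$; where $x^{+}:=1\oplus(-1\oplus x)$, $x^{-}:=-1\oplus(1\oplus x)$, $x\vee y:=(x^{+}\oplus(-x^{+}\oplus y^{+})^{+})\oplus(x^{-}\oplus(-x^{-}\oplus y^{-})^{+})$. Write $y\ominus x:=y\oplus(-x)$. A filter of an MV*-algebra $\mathbf{B}$ is a subset $F\subseteq B$ such that: (F1) $\{x^{+}:x\in B\}\subseteq F$; (F2) if $x\in F$ and $y\ominus x\in F$ then $y\in F$; (F3) if $x\oplus y\in F$ and $t\in B$ then $(x\oplus t)\oplus(y\ominus t)\in F$. *)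

From Stdlib Require Import ClassicalEpsilon.

(* Formulas F(V): variables p_n (n : nat), constant 1, ->, not, ^+, ^- *)
Inductive form : Type :=
| Var : nat -> form
| One : form
| Imp : form -> form -> form
| Neg : form -> form
| Plus : form -> form
| Minus : form -> form.

Definition Or (p q : form) : form :=
  Imp (Imp (Plus (Imp (Plus p) (Plus q))) (Minus (Neg p)))
      (Imp (Minus (Imp (Minus q) (Minus p))) (Minus p)).

(* Axiom schemas of qL*; A <-> B contributes both A -> B and B -> A. *)
Inductive Axiom_qL : form -> Prop :=
| Q1a p q : Axiom_qL (Imp (Imp p q) (Imp (Neg q) (Neg p)))
| Q1b p q : Axiom_qL (Imp (Imp (Neg q) (Neg p)) (Imp p q))
| Q2a p : Axiom_qL (Imp One (Imp (Imp One p) One))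
| Q2b p : Axiom_qL (Imp (Imp (Imp One p) One) One)
| Q3a p q : Axiom_qL (Imp p (Imp (Imp q q) p))
| Q3b p q : Axiom_qL (Imp (Imp (Imp q q) p) p)
| Q4a p q : Axiom_qL (Imp (Imp p q) (Imp (Imp (Plus q) (Minus p)) (Imp (Plus p) (Minus q))))
| Q4b p q : Axiom_qL (Imp (Imp (Imp (Plus q) (Minus p)) (Imp (Plus p) (Minus q))) (Imp p q))
| Q5a p q : Axiom_qL (Imp (Neg (Imp p q)) (Imp q p))
| Q5b p q : Axiom_qL (Imp (Imp q p) (Neg (Imp p q)))
| Q6a p q : Axiom_qL (Imp (Plus (Imp p (Imp (Neg p) q)))
                          (Imp (Plus p) (Imp (Neg (Plus p)) (Plus q))))
| Q6b p q : Axiom_qL (Imp (Imp (Plus p) (Imp (Neg (Plus p)) (Plus q)))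
                          (Plus (Imp p (Imp (Neg p) q))))
| Q7a p q r : Axiom_qL (Imp (Imp p (Or q r)) (Or (Imp p r) (Imp p q)))
| Q7b p q r : Axiom_qL (Imp (Or (Imp p r) (Imp p q)) (Imp p (Or q r)))
| Q8a p q r : Axiom_qL (Imp (Or p (Or q r)) (Or (Or p q) r))
| Q8b p q r : Axiom_qL (Imp (Or (Or p q) r) (Or p (Or q r)))
| Q9 p q r : Axiom_qL (Imp (Imp (Imp p One) (Imp (Imp q One) r))
                           (Imp (Imp q One) (Imp (Imp p One) r)))
| Q10 p : Axiom_qL (Imp p One)
| Q11a p : Axiom_qL (Imp (Imp (Imp One One) (Plus p)) (Imp (Imp p One) One))
| Q11b p : Axiom_qL (Imp (Imp (Imp p One) One) (Imp (Imp One One) (Plus p)))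
| Q11c p : Axiom_qL (Imp (Imp (Imp One One) (Minus p)) (Imp (Imp p (Neg One)) (Neg One)))
| Q11d p : Axiom_qL (Imp (Imp (Imp p (Neg One)) (Neg One)) (Imp (Imp One One) (Minus p))).

(* Gamma |- q  (inductive closure = existence of a finite derivation) *)
Inductive deriv (Gamma : form -> Prop) : form -> Prop :=
| d_ax p : Axiom_qL p -> deriv Gamma p
| d_hyp p : Gamma p -> deriv Gamma p
| d_R1 p q r : deriv Gamma p -> deriv Gamma (Imp p q) -> deriv Gamma (Imp (Imp r r) q)
| d_R2 p q r : deriv Gamma (Imp (Imp r r) (Imp p q)) -> deriv Gamma (Imp p q)
| d_R3 p q r t : deriv Gamma (Imp p q) -> deriv Gamma (Imp r t) ->
                 deriv Gamma (Imp (Imp q r) (Imp p t)).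

Definition is_theory (Theta : form -> Prop) : Prop :=
  forall q, deriv Theta q <-> Theta q.

Definition empty_set : form -> Prop := fun _ => False.

Definition equiv (p q : form) : Prop :=
  deriv empty_set (Imp p q) /\ deriv empty_set (Imp q p).

Definition cls (p : form) : form -> Prop := fun q => equiv p q.
Definition LT : Type := { S : form -> Prop | exists p, S = cls p }.
Definition cl (p : form) : LT := exist _ (cls p) (ex_intro _ p eq_refl).
Definition repr (x : LT) : form :=
  proj1_sig (constructive_indefinite_description _ (proj2_sig x)).

Definition LT_opp (x : LT) : LT := cl (Neg (repr x)).
Definition LT_oplus (x y : LT) : LT := cl (Imp (Neg (repr x)) (repr y)).
Definition LT_zero : LT := cl (Imp (Var 0) (Var 0)).
Definition LT_one : LT := cl One.

Definition mv_pos {B : Type} (oplus : B -> B -> B) (opp : B -> B) (one : B) (x : B) : B :=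
  oplus one (oplus (opp one) x).
Definition mv_ominus {B : Type} (oplus : B -> B -> B) (opp : B -> B) (y x : B) : B :=
  oplus y (opp x).

Definition is_filter {B : Type} (oplus : B -> B -> B) (opp : B -> B) (zero one : B)
  (F : B -> Prop) : Prop :=
  (forall x, F (mv_pos oplus opp one x)) /\
  (forall x y, F x -> F (mv_ominus oplus opp y x) -> F y) /\
  (forall x y t, F (oplus x y) ->
     F (oplus (oplus x t) (mv_ominus oplus opp y t))).

Definition theta_cls (Theta : form -> Prop) : LT -> Prop :=
  fun x => exists p, Theta p /\ x = cl p.

(** Since rule R1 only ever concludes formulas of the form [(r -> r) -> q], a
    theory need not contain [q] itself; but by Q3 the class of [q] is that of
    [(1 -> 1) -> q], so a class [[q]] lies in [[Theta]] exactly when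
    [Theta |- (1 -> 1) -> q].  On representatives the filter conditions then
    become derivations: [[p]^+] is the class of [~1 -> (~~1 -> p)], an ex falso
    theorem obtained from Q2, Q5, Q3 and Q10; (F2) is contraposition (Q1) and
    transitivity; (F3) follows from [~(~x -> t) -> (t -> ~x)] (Q5), Q1, and the
    contrapositive of the hypothesis [~x -> y]. *)
From Stdlib Require Import ClassicalEpsilon FunctionalExtensionality PropExtensionality ProofIrrelevance.

Section Derivations.
Variable Gamma : form -> Prop.

Lemma deriv_imp_refl p : deriv Gamma (Imp p p).
Proof.
  apply (d_R2 Gamma p p (Imp (Imp p p) p)).
  apply d_R3; apply d_ax; constructor.
Qed.

Lemma deriv_mp_imp p a b :
  deriv Gamma p -> deriv Gamma (Imp p (Imp a b)) -> deriv Gamma (Imp a b).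
Proof. intros Hp Hpab. exact (d_R2 Gamma a b One (d_R1 Gamma _ _ One Hp Hpab)). Qed.

Lemma deriv_imp_trans a b c :
  deriv Gamma (Imp a b) -> deriv Gamma (Imp b c) -> deriv Gamma (Imp a c).
Proof.
  intros Hab Hbc. apply (deriv_mp_imp _ _ _ Hbc).
  apply d_R3; [exact Hab | apply deriv_imp_refl].
Qed.

Lemma deriv_contra a b : deriv Gamma (Imp a b) -> deriv Gamma (Imp (Neg b) (Neg a)).
Proof. intros Hab. apply (deriv_mp_imp _ _ _ Hab). apply d_ax; constructor. Qed.

Lemma deriv_uncontra a b : deriv Gamma (Imp (Neg b) (Neg a)) -> deriv Gamma (Imp a b).
Proof. intros Hba. apply (deriv_mp_imp _ _ _ Hba). apply d_ax; constructor. Qed.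

Lemma deriv_trivial_imp_intro q : deriv Gamma q -> deriv Gamma (Imp (Imp One One) q).
Proof. intros Hq. exact (d_R1 Gamma _ _ One Hq (deriv_imp_refl q)). Qed.

End Derivations.

Lemma deriv_weaken Gamma p : deriv empty_set p -> deriv Gamma p.
Proof.
  induction 1 as [p Hax | p [] | p q r _ IHp _ IHpq | p q r _ IH | p q r t _ IHpq _ IHrt].
  - now apply d_ax.
  - exact (d_R1 Gamma p q r IHp IHpq).
  - exact (d_R2 Gamma p q r IH).
  - exact (d_R3 Gamma p q r t IHpq IHrt).
Qed.

Lemma neg_one_explosion p : deriv empty_set (Imp (Neg One) (Imp (Neg (Neg One)) p)).
Proof.
  apply deriv_imp_trans with (Neg (Imp (Imp One p) One)).
  { apply deriv_contra with (a := Imp (Imp One p) One), d_ax; constructor. }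
  apply deriv_imp_trans with (Imp One (Imp One p)).
  { apply d_ax; constructor. }
  apply deriv_imp_trans with (Imp (Imp One One) (Imp One p)).
  { apply d_R3; [apply d_ax; constructor | apply deriv_imp_refl]. }
  apply deriv_imp_trans with (Imp One p).
  { apply d_ax; constructor. }
  apply d_R3; [apply d_ax; constructor | apply deriv_imp_refl].
Qed.

Lemma equiv_refl p : equiv p p.
Proof. split; apply deriv_imp_refl. Qed.

Lemma equiv_trans p q r : equiv p q -> equiv q r -> equiv p r.
Proof. intros [Hpq Hqp] [Hqr Hrq]; split; eapply deriv_imp_trans; eassumption. Qed.

Lemma equiv_sym p q : equiv p q -> equiv q p.
Proof. intros [Hpq Hqp]; split; assumption. Qed.

Lemma equiv_Neg p q : equiv p q -> equiv (Neg p) (Neg q).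
Proof. intros [Hpq Hqp]; split; apply deriv_contra; assumption. Qed.

Lemma equiv_Imp a a' b b' : equiv a a' -> equiv b b' -> equiv (Imp a b) (Imp a' b').
Proof. intros [Ha Ha'] [Hb Hb']; split; apply d_R3; assumption. Qed.

Lemma equiv_trivial_imp q : equiv q (Imp (Imp One One) q).
Proof. split; apply d_ax; constructor. Qed.

Lemma cls_eq_equiv p q : cls p = cls q -> equiv p q.
Proof. intros E. change (cls p q). rewrite E. apply equiv_refl. Qed.

Lemma cl_eq p q : equiv p q -> cl p = cl q.
Proof.
  intros Hpq. apply subset_eq_compat.
  extensionality r. apply propositional_extensionality.
  split; apply equiv_trans; [apply equiv_sym|]; exact Hpq.
Qed.

Lemma cl_surjective x : exists p, x = cl p.
Proof. destruct x as [S [p ->]]. now exists p. Qed.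

Lemma repr_cl p : equiv (repr (cl p)) p.
Proof.
  apply equiv_sym, cls_eq_equiv. unfold repr.
  destruct (constructive_indefinite_description _ _) as [r Hr]. exact Hr.
Qed.

Lemma LT_opp_cl p : LT_opp (cl p) = cl (Neg p).
Proof. apply cl_eq, equiv_Neg, repr_cl. Qed.

Lemma LT_oplus_cl p q : LT_oplus (cl p) (cl q) = cl (Imp (Neg p) q).
Proof. apply cl_eq, equiv_Imp; [apply equiv_Neg|]; apply repr_cl. Qed.

Lemma mv_pos_cl p :
  mv_pos LT_oplus LT_opp LT_one (cl p) = cl (Imp (Neg One) (Imp (Neg (Neg One)) p)).
Proof. unfold mv_pos, LT_one. now rewrite LT_opp_cl, !LT_oplus_cl. Qed.

Lemma mv_ominus_cl p q : mv_ominus LT_oplus LT_opp (cl p) (cl q) = cl (Imp (Neg p) (Neg q)).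
Proof. unfold mv_ominus. now rewrite LT_opp_cl, LT_oplus_cl. Qed.

Lemma theta_cls_cl Theta q : is_theory Theta ->
  theta_cls Theta (cl q) <-> deriv Theta (Imp (Imp One One) q).
Proof.
  intros HT. split.
  - intros [p [Hp E]].
    destruct (cls_eq_equiv q p (f_equal (@proj1_sig _ _) E)) as [_ Hpq].
    exact (d_R1 Theta _ _ One (proj2 (HT p) Hp) (deriv_weaken _ _ Hpq)).
  - intros Hq. exists (Imp (Imp One One) q). split.
    + apply HT, Hq.
    + apply cl_eq, equiv_trivial_imp.
Qed.

Theorem proposition5p5 (Theta : form -> Prop) (HT : is_theory Theta) :
  is_filter LT_oplus LT_opp LT_zero LT_one (theta_cls Theta).
Proof.
  split; [|split].
  - intros x. destruct (cl_surjective x) as [p ->].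
    rewrite mv_pos_cl, theta_cls_cl by exact HT.
    apply deriv_trivial_imp_intro, deriv_weaken, neg_one_explosion.
  - intros x y. destruct (cl_surjective x) as [p ->], (cl_surjective y) as [q ->].
    rewrite mv_ominus_cl, !theta_cls_cl by exact HT.
    intros Hp Hqp. apply (deriv_imp_trans _ _ _ _ Hp).
    exact (deriv_uncontra _ _ _ (d_R2 _ _ _ _ Hqp)).
  - intros x y t.
    destruct (cl_surjective x) as [p ->], (cl_surjective y) as [q ->],
      (cl_surjective t) as [r ->].
    rewrite mv_ominus_cl, !LT_oplus_cl, !theta_cls_cl by exact HT.
    intros Hpq%d_R2. apply deriv_trivial_imp_intro.
    apply deriv_imp_trans with (Imp r (Neg p)).
    { apply d_ax; constructor. }
    apply deriv_imp_trans with (Imp (Neg (Neg p)) (Neg r)).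
    { apply d_ax; constructor. }
    apply d_R3; [apply deriv_contra, Hpq | apply deriv_imp_refl].
Qed.
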